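(* If $G$ is a special grid operator and $k\in\mathbb{Z}$, then $G'=\sigma^k G \sigma^k$ is a special grid operator and moreover $G'^\bullet = (-\tau)^k G^\bullet \tau^k$.
   Context: Let $\omega=e^{i\pi/4}$ and regard $\mathbb{Z}[\omega]$ as a subset of $\mathbb{R}^2\cong\mathbb{C}$. A grid operator is a real linear operator $G:\mathbb{R}^2\to\mathbb{R}^2$ with $G(\mathbb{Z}[\omega])\subseteq\mathbb{Z}[\omega]$; it is special if it has determinant $\pm 1$. The map $(-)^\bullet$ is $\sqrt2$-conjugation, the automorphism of $\mathbb{Z}[\omega]$ sending $a_0+a_1\omega+a_2\omega^2+a_3\omega^3$ to $a_0-a_1\omega+a_2\omega^2-a_3\omega^3$ (on $\mathbb{Q}(\sqrt2)$ it sends $a+b\sqrt2$ to $a-b\sqrt2$); for a matrix $G$, $G^\bullet$ is obtained by applying $(-)^\bullet$ to each entry. Let $\lambda=1+\sqrt2$ (so $\lambda^\bullet=-\lambda^{-1}$). The shift operators are \[ \sigma = \sqrt{\lambda^{-1}}\begin{bmatrix}\lambda & 0\\ 0 & 1\end{bmatrix},\qquad \tau = \sqrt{\lambda^{-1}}\begin{bmatrix}1 & 0\\ 0 & -\lambda\end{bmatrix}. \] *)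

From HB Require Import structures.
From mathcomp Require Import all_boot all_order all_algebra.
From mathcomp Require Import boolp classical_sets reals.
Set Implicit Arguments. Unset Strict Implicit. Unset Printing Implicit Defensive.
Import Order.TTheory GRing.Theory Num.Theory.
Local Open Scope ring_scope.

Section Defs.
Variable R : realType.

Definition sqrt2 : R := Num.sqrt 2.

(* omega = e^{i pi/4}; R^2 ~ C via (x, y) <-> x + i y, column vectors. *)
(* The point a0 + a1 w + a2 w^2 + a3 w^3 of Z[w] as a vector of R^2:
   w = (1+i)/sqrt2, w^2 = i, w^3 = (-1+i)/sqrt2. *)
Definition omega_pt (a0 a1 a2 a3 : int) : 'cV[R]_2 :=
  \col_(i < 2) (if i == 0 then a0%:~R + (a1%:~R - a3%:~R) / sqrt2
                else a2%:~R + (a1%:~R + a3%:~R) / sqrt2).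

Definition in_Zomega (v : 'cV[R]_2) : Prop :=
  exists a0 a1 a2 a3 : int, v = omega_pt a0 a1 a2 a3.

Definition grid_op (G : 'M[R]_2) : Prop :=
  forall v, in_Zomega v -> in_Zomega (G *m v).

Definition special_grid_op (G : 'M[R]_2) : Prop :=
  grid_op G /\ (\det G = 1 \/ \det G = -1).

(* sqrt2-conjugation on Q(sqrt2): a + b sqrt2 |-> a - b sqrt2 (a, b rational).
   Outside Q(sqrt2) it is (arbitrarily) the identity. *)
Definition sqrt2conj (x : R) : R :=
  let p := xget (0, 0) [set p : rat * rat | x = ratr p.1 + ratr p.2 * sqrt2] in
  if x == ratr p.1 + ratr p.2 * sqrt2 then ratr p.1 - ratr p.2 * sqrt2 else x.

Definition bullet (G : 'M[R]_2) : 'M[R]_2 := map_mx sqrt2conj G.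

Definition mx2 (a b c d : R) : 'M[R]_2 :=
  \matrix_(i < 2, j < 2)
    (if i == 0 then (if j == 0 then a else b) else (if j == 0 then c else d)).

Definition lambda : R := 1 + sqrt2.

Definition sigma : 'M[R]_2 := Num.sqrt (lambda^-1) *: mx2 lambda 0 0 1.
Definition tau : 'M[R]_2 := Num.sqrt (lambda^-1) *: mx2 1 0 0 (- lambda).

End Defs.

From HB Require Import structures.
From mathcomp Require Import all_boot all_order all_algebra.
From mathcomp Require Import boolp classical_sets reals.
From mathcomp Require Import ring lra zify.
(* With r := sqrt(lambda^-1) we have sigma = r diag(lambda, 1), tau = r diag(1, -lambda)
   and r^2 = lambda^-1, so sigma G sigma = diag(lambda, 1) G diag(1, lambda^-1) only
   rescales the diagonal of G, by lambda and lambda^-1, while (-tau) X tau rescales it by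
   -lambda^-1 = lambda^bullet and -lambda = (lambda^-1)^bullet.  The diagonal factors
   diag(lambda^(+-1), 1) and diag(1, lambda^(+-1)) are grid operators, and the two flanking
   G have inverse determinants, so sigma G sigma is again special.  The entries of a grid
   operator lie in Q(sqrt2), on which bullet is multiplicative, hence
   (sigma G sigma)^bullet = (-tau) G^bullet tau.  Inverting both identities handles
   sigma^-1, and induction handles every k. *)

Set Implicit Arguments. Unset Strict Implicit. Unset Printing Implicit Defensive.
Import Order.TTheory GRing.Theory Num.Theory.
Local Open Scope ring_scope.

Lemma rat_sqr_neq2 (q : rat) : q * q != 2.
Proof.
apply/eqP => q2.
have den_neq0 : (denq q)%:~R != 0 :> rat by rewrite intr_eq0 denq_neq0.
have int_eq : numq q * numq q = 2 * denq q * denq q.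
  apply: (@intr_inj rat); rewrite !rmorphM /= (_ : 2%:~R = 2 :> rat) //.
  have -> : 2 = (numq q)%:~R / (denq q)%:~R * ((numq q)%:~R / (denq q)%:~R) :> rat
    by rewrite divq_num_den.
  by field.
set n := `|numq q|%N; set d := `|denq q|%N.
have nat_eq : (n * n = 2 * d * d)%N by move/(congr1 absz): int_eq; rewrite !abszM.
have n_even : ~~ odd n.
  by move/(congr1 odd): nat_eq; rewrite oddM andbb -mulnA mul2n odd_double => ->.
have d_even : ~~ odd d.
  have n_half : n = (n./2).*2 by rewrite -[n in LHS]odd_double_half (negbTE n_even).
  have : (d * d = 2 * (n./2 * n./2))%N.
    by move: nat_eq; rewrite n_half -mul2n; set m := n./2; nia.
  by move/(congr1 odd); rewrite oddM andbb mul2n odd_double => ->.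
have : (2 %| gcdn n d)%N by rewrite dvdn_gcd !dvdn2 n_even d_even.
by rewrite (eqP (coprime_num_den q)).
Qed.

Section RealQuadratic.
Variable R : realType.
Local Notation s := (sqrt2 R).
Local Notation lam := (lambda R).

Lemma sqrt2_gt0 : 0 < s.
Proof. by rewrite /sqrt2 sqrtr_gt0 ltr0n. Qed.

Lemma sqrt2_neq0 : s != 0.
Proof. by rewrite gt_eqF // sqrt2_gt0. Qed.

Lemma sqrt2_sqr : s * s = 2.
Proof. by rewrite -expr2 /sqrt2 sqr_sqrtr // ler0n. Qed.

Lemma sqrt2_sqrM x : s * s * x = 2 * x.
Proof. by rewrite sqrt2_sqr. Qed.

Lemma invsqrt2 : s^-1 = s / 2.
Proof.
apply: (mulfI sqrt2_neq0).
by rewrite mulfV ?sqrt2_neq0 // mulrA sqrt2_sqr divff // pnatr_eq0.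
Qed.

Lemma lambda_gt0 : 0 < lam.
Proof. by rewrite /lambda; have := sqrt2_gt0; lra. Qed.

Lemma lambda_neq0 : lam != 0.
Proof. by rewrite gt_eqF // lambda_gt0. Qed.

Lemma invlambda : lam^-1 = s - 1.
Proof.
apply: (mulfI lambda_neq0); rewrite mulfV ?lambda_neq0 // /lambda.
by have := sqrt2_sqr; lra.
Qed.

Definition in_Qsqrt2 (x : R) := exists a b : rat, x = ratr a + ratr b * s.

Lemma Qsqrt2_coord_inj a b c d :
  ratr a + ratr b * s = ratr c + ratr d * s -> a = c /\ b = d.
Proof.
move=> E; have [eq_bd|neq_bd] := eqVneq b d.
  by rewrite eq_bd in E *; split=> //; apply: (fmorph_inj (@ratr R)); move: E; lra.
have dB_neq0 : ratr d - ratr b != 0 :> R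
  by rewrite -rmorphB fmorph_eq0 subr_eq0 eq_sym.
have s_rat : s = ratr ((a - c) / (d - b)).
  rewrite fmorph_div !rmorphB /=; apply: (canRL (mulfK dB_neq0)); move: E; lra.
have := rat_sqr_neq2 ((a - c) / (d - b)).
by rewrite -(inj_eq (fmorph_inj (@ratr R))) rmorphM /= -s_rat sqrt2_sqr rmorph_nat eqxx.
Qed.

Lemma sqrt2conjE a b : sqrt2conj (ratr a + ratr b * s) = ratr a - ratr b * s.
Proof.
rewrite /sqrt2conj; set p := xget _ _.
have : ratr a + ratr b * s = ratr p.1 + ratr p.2 * s.
  apply: (@xgetPex _ (0, 0)
    (fun p : rat * rat => ratr a + ratr b * s = ratr p.1 + ratr p.2 * s)).
  by exists (a, b).
by move=> E; have [-> ->] := Qsqrt2_coord_inj E; rewrite eqxx.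
Qed.

Lemma sqrt2conjM x y : in_Qsqrt2 x -> in_Qsqrt2 y ->
  sqrt2conj (x * y) = sqrt2conj x * sqrt2conj y.
Proof.
move=> [a [b ->]] [c [d ->]].
have -> : (ratr a + ratr b * s) * (ratr c + ratr d * s) =
          ratr (a * c + 2 * b * d) + ratr (a * d + b * c) * s.
  rewrite !rmorphD !rmorphM /= rmorph_nat.
  by rewrite -sqrt2_sqr; ring.
rewrite !sqrt2conjE !rmorphD !rmorphM /= rmorph_nat.
by rewrite -sqrt2_sqr; ring.
Qed.

Lemma Qsqrt2_lambda : in_Qsqrt2 lam.
Proof. by exists 1, 1; rewrite rmorph1 mul1r. Qed.

Lemma Qsqrt2_invlambda : in_Qsqrt2 lam^-1.
Proof. by exists (-1), 1; rewrite invlambda rmorphN !rmorph1 mul1r addrC. Qed.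

Lemma sqrt2conj_lambda : sqrt2conj lam = - lam^-1.
Proof.
have lamE : lam = ratr 1 + ratr 1 * s by rewrite rmorph1 mul1r.
by rewrite {1}lamE sqrt2conjE invlambda rmorph1 mul1r opprB addrC.
Qed.

Lemma sqrt2conj_invlambda : sqrt2conj lam^-1 = - lam.
Proof.
have lamVE : lam^-1 = ratr (-1) + ratr 1 * s.
  by rewrite invlambda rmorphN !rmorph1 mul1r addrC.
by rewrite lamVE sqrt2conjE rmorphN !rmorph1 mul1r /lambda opprD.
Qed.

End RealQuadratic.

Section TwoByTwo.
Variable R : realType.
Local Notation mx2 := (@mx2 R).

Ltac mx2_entries := apply/matrixP => -[[|[|?]] ?] -[[|[|?]] ?]; rewrite ?mxE //=.

Lemma mx2E (G : 'M[R]_2) : G = mx2 (G 0 0) (G 0 1) (G 1 0) (G 1 1).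
Proof. by mx2_entries; congr (G _ _); apply: val_inj. Qed.

Lemma mx2M a b c d a' b' c' d' :
  mx2 a b c d * mx2 a' b' c' d' =
  mx2 (a * a' + b * c') (a * b' + b * d') (c * a' + d * c') (c * b' + d * d').
Proof. by rewrite -mulmxE; mx2_entries; rewrite !big_ord_recl big_ord0 !mxE /= addr0. Qed.

Lemma scale_mx2 k a b c d : k *: mx2 a b c d = mx2 (k * a) (k * b) (k * c) (k * d).
Proof. by mx2_entries. Qed.

Lemma map_mx2 (f : R -> R) a b c d :
  map_mx f (mx2 a b c d) = mx2 (f a) (f b) (f c) (f d).
Proof. by mx2_entries. Qed.

Lemma det_mx2 a b c d : \det (mx2 a b c d) = a * d - b * c.
Proof.
rewrite (expand_det_row _ 0) !big_ord_recl big_ord0 /cofactor !det_mx11 !mxE /bump /=.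
by rewrite expr0 expr1 mul1r mulN1r addr0 mulrN.
Qed.

Lemma unit_diag_mx2 a d : a != 0 -> d != 0 -> mx2 a 0 0 d \is a GRing.unit.
Proof. by move=> a_neq0 d_neq0; rewrite unitmxE det_mx2 !mulr0 subr0 unitfE mulf_neq0. Qed.

End TwoByTwo.

Section GridOperators.
Variable R : realType.
Local Notation lam := (lambda R).
Local Notation mx2 := (@mx2 R).

Lemma grid_opM (A B : 'M[R]_2) : grid_op A -> grid_op B -> grid_op (A * B).
Proof. by move=> gridA gridB v Zv; rewrite -mulmxE -mulmxA; apply/gridA/gridB. Qed.

Lemma Qsqrt2_omega_pt a0 a1 a2 a3 i : in_Qsqrt2 (omega_pt R a0 a1 a2 a3 i 0).
Proof.
rewrite mxE; case: ifP => _.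
  exists a0%:~R, ((a1 - a3)%:~R / 2).
  by rewrite fmorph_div /= !rmorph_int rmorph_nat intrB invsqrt2; ring.
exists a2%:~R, ((a1 + a3)%:~R / 2).
by rewrite fmorph_div /= !rmorph_int rmorph_nat intrD invsqrt2; ring.
Qed.

Lemma Zomega_delta_mx (j : 'I_2) : in_Zomega (delta_mx j 0 : 'cV[R]_2).
Proof.
case: j => -[|[|//]] lt_j2.
- by exists 1, 0, 0, 0; apply/matrixP => -[[|[|//]] ?] -[[|//] ?]; rewrite !mxE /=; lra.
- by exists 0, 0, 1, 0; apply/matrixP => -[[|[|//]] ?] -[[|//] ?]; rewrite !mxE /=; lra.
Qed.

Lemma grid_op_Qsqrt2 (G : 'M[R]_2) i j : grid_op G -> in_Qsqrt2 (G i j).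
Proof.
move=> gridG; have [a0 [a1 [a2 [a3 colG]]]] := gridG _ (Zomega_delta_mx j).
by have := Qsqrt2_omega_pt a0 a1 a2 a3 i; rewrite -colG -colE mxE.
Qed.

(* [lra] sees the monomials [s * s * ai] as atoms, so [s * s = 2] is supplied at each one. *)
Ltac omega_pt_eq a0 a1 a2 a3 :=
  apply/matrixP => -[[|[|//]] ?] -[[|//] ?];
  rewrite !mxE !big_ord_recl big_ord0 !mxE /= ?intrD ?intrB ?intrN ?invlambda /lambda;
  rewrite invsqrt2;
  have := sqrt2_sqrM (a0%:~R : R); have := sqrt2_sqrM (a1%:~R : R);
  have := sqrt2_sqrM (a2%:~R : R); have := sqrt2_sqrM (a3%:~R : R); lra.

Lemma grid_op_diag_lambda : grid_op (mx2 lam 0 0 1).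
Proof.
move=> _ [a0 [a1 [a2 [a3 ->]]]]; exists (a0 + a1 - a3), (a1 + a0), a2, (a3 - a0).
omega_pt_eq a0 a1 a2 a3.
Qed.

Lemma grid_op_diag_invlambda : grid_op (mx2 lam^-1 0 0 1).
Proof.
move=> _ [a0 [a1 [a2 [a3 ->]]]]; exists (a1 - a3 - a0), (a0 + a3), a2, (a1 - a0).
omega_pt_eq a0 a1 a2 a3.
Qed.

Lemma grid_op_diag1_lambda : grid_op (mx2 1 0 0 lam).
Proof.
move=> _ [a0 [a1 [a2 [a3 ->]]]]; exists a0, (a1 + a2), (a2 + a1 + a3), (a3 + a2).
omega_pt_eq a0 a1 a2 a3.
Qed.

Lemma grid_op_diag1_invlambda : grid_op (mx2 1 0 0 lam^-1).
Proof.
move=> _ [a0 [a1 [a2 [a3 ->]]]]; exists a0, (a2 - a3), (a1 + a3 - a2), (a2 - a1).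
omega_pt_eq a0 a1 a2 a3.
Qed.

End GridOperators.

Section Stretch.
Variable R : realType.
Local Notation lam := (lambda R).
Local Notation mx2 := (@mx2 R).

Definition stretch (e : R) (G : 'M[R]_2) : 'M[R]_2 :=
  mx2 (e * G 0 0) (G 0 1) (G 1 0) (e^-1 * G 1 1).

Lemma stretchK (e : R) (G : 'M[R]_2) : e != 0 -> stretch e (stretch e^-1 G) = G.
Proof. by move=> e_neq0; rewrite [RHS]mx2E /stretch !mxE /= invrK; congr mx2; field. Qed.

Lemma stretchE e (G : 'M[R]_2) :
  e != 0 -> stretch e G = mx2 e 0 0 1 * G * mx2 1 0 0 e^-1.
Proof. by move=> e_neq0; rewrite [G in RHS]mx2E !mx2M /stretch; congr mx2; field. Qed.

Lemma det_stretch e (G : 'M[R]_2) : e != 0 -> \det (stretch e G) = \det G.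
Proof. by move=> e_neq0; rewrite [G in RHS]mx2E !det_mx2; field. Qed.

Lemma bullet_stretch e (G : 'M[R]_2) :
  in_Qsqrt2 e -> in_Qsqrt2 e^-1 -> sqrt2conj e^-1 = (sqrt2conj e)^-1 ->
  (forall i j, in_Qsqrt2 (G i j)) ->
  bullet (stretch e G) = stretch (sqrt2conj e) (bullet G).
Proof.
move=> Qe QeV conjV QG; rewrite /bullet /stretch map_mx2 !mxE.
by rewrite !sqrt2conjM // conjV.
Qed.

Lemma special_stretch_lambda e (G : 'M[R]_2) : e = lam \/ e = lam^-1 ->
  special_grid_op G ->
  special_grid_op (stretch e G) /\ bullet (stretch e G) = stretch (- e^-1) (bullet G).
Proof.
move=> e_lam [gridG detG].
have e_neq0 : e != 0 by case: e_lam => ->; rewrite ?invr_eq0 lambda_neq0.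
have [gridD gridD1] : grid_op (mx2 e 0 0 1) /\ grid_op (mx2 1 0 0 e^-1).
  by case: e_lam => ->; rewrite ?invrK; split;
    by [apply: grid_op_diag_lambda | apply: grid_op_diag_invlambda |
        apply: grid_op_diag1_lambda | apply: grid_op_diag1_invlambda].
have [Qe QeV] : in_Qsqrt2 e /\ in_Qsqrt2 e^-1.
  by case: e_lam => ->; rewrite ?invrK; split;
    by [apply: Qsqrt2_lambda | apply: Qsqrt2_invlambda].
have [conj_e conj_eV] : sqrt2conj e = - e^-1 /\ sqrt2conj e^-1 = - e.
  by case: e_lam => ->; rewrite ?invrK; split;
    by [apply: sqrt2conj_lambda | apply: sqrt2conj_invlambda].
split; first split.
- by rewrite stretchE //; do 2!apply: grid_opM => //.
- by rewrite det_stretch.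
- by rewrite bullet_stretch ?conj_e ?conj_eV ?invrN ?invrK // => i j; apply: grid_op_Qsqrt2.
Qed.

Lemma stretch_sandwichV (A C : 'M[R]_2) e :
  A \is a GRing.unit -> C \is a GRing.unit -> e != 0 ->
  (forall X, A * X * C = stretch e X) ->
  forall X, A^-1 * X * C^-1 = stretch e^-1 X.
Proof.
move=> unitA unitC e_neq0 sandwich X.
by rewrite -{1}(stretchK X e_neq0) -sandwich -!mulrA mulKr // mulrV // mulr1.
Qed.

End Stretch.

Section Shifts.
Variable R : realType.
Local Notation lam := (lambda R).
Local Notation sigma := (sigma R).
Local Notation tau := (tau R).

Lemma sqrt_invlambda_sqr : Num.sqrt lam^-1 * Num.sqrt lam^-1 = lam^-1.
Proof. by rewrite -expr2 sqr_sqrtr // invr_ge0 ltW // lambda_gt0. Qed.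

Lemma sigma_sandwich (G : 'M[R]_2) : sigma * G * sigma = stretch lam G.
Proof.
rewrite /sigma -scalerAl -scalerAr -scalerAl scalerA sqrt_invlambda_sqr.
rewrite [G in LHS]mx2E !mx2M scale_mx2 /stretch; congr mx2; field; exact: lambda_neq0.
Qed.

Lemma tau_sandwich (X : 'M[R]_2) : - tau * X * tau = stretch (- lam^-1) X.
Proof.
rewrite /tau !mulNr -scalerAl -scalerAr -scalerAl scalerA sqrt_invlambda_sqr -scaleNr.
rewrite [X in LHS]mx2E !mx2M scale_mx2 /stretch; congr mx2; field; exact: lambda_neq0.
Qed.

Lemma sqrt_invlambda_neq0 : Num.sqrt lam^-1 != 0.
Proof. by rewrite sqrtr_eq0 -ltNge invr_gt0 lambda_gt0. Qed.

Lemma sigma_unit : sigma \is a GRing.unit.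
Proof.
rewrite /sigma scale_mx2 mulr0 mulr1 unit_diag_mx2 // ?sqrt_invlambda_neq0 //.
by rewrite mulf_neq0 ?sqrt_invlambda_neq0 ?lambda_neq0.
Qed.

Lemma tau_unit : tau \is a GRing.unit.
Proof.
rewrite /tau scale_mx2 mulr0 mulr1 unit_diag_mx2 // ?sqrt_invlambda_neq0 //.
by rewrite mulrN oppr_eq0 mulf_neq0 ?sqrt_invlambda_neq0 ?lambda_neq0.
Qed.

Definition shift_law (A B C : 'M[R]_2) := forall G, special_grid_op G ->
  special_grid_op (A * G * A) /\ bullet (A * G * A) = B * bullet G * C.

Lemma shift_lawX A B C n : shift_law A B C -> shift_law (A ^+ n) (B ^+ n) (C ^+ n).
Proof.
move=> law; elim: n => [|n IHn] G specG; first by rewrite !expr0 !mul1r !mulr1.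
have [specGn bulletGn] := IHn G specG.
have nest M N Y : M ^+ n.+1 * Y * N ^+ n.+1 = M * (M ^+ n * Y * N ^+ n) * N.
  by rewrite exprS exprSr !mulrA.
by rewrite !nest -bulletGn; apply: law.
Qed.

Lemma shift_law_sigma : shift_law sigma (- tau) tau.
Proof.
move=> G /(special_stretch_lambda (or_introl erefl)).
by rewrite sigma_sandwich tau_sandwich.
Qed.

Lemma shift_law_invsigma : shift_law sigma^-1 (- tau)^-1 tau^-1.
Proof.
have Ntau_unit : - tau \is a GRing.unit by rewrite unitrN tau_unit.
move=> G /(special_stretch_lambda (or_intror erefl)); rewrite invrK.
rewrite (stretch_sandwichV sigma_unit sigma_unit _ sigma_sandwich) ?lambda_neq0 //.
rewrite (stretch_sandwichV Ntau_unit tau_unit _ tau_sandwich) ?invrN ?invrK //.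
by rewrite oppr_eq0 invr_eq0 lambda_neq0.
Qed.

End Shifts.

Theorem lemma5p42 (R : realType) (G : 'M[R]_2) (k : int) :
  special_grid_op G ->
  special_grid_op ((sigma R) ^ k * G * (sigma R) ^ k) /\
  bullet ((sigma R) ^ k * G * (sigma R) ^ k) =
    (- tau R) ^ k * bullet G * (tau R) ^ k.
Proof.
case: k => n.
  by rewrite -!exprnP; apply: shift_lawX; apply: shift_law_sigma.
by rewrite NegzE -!exprnN -!exprVn; apply: shift_lawX; apply: shift_law_invsigma.
Qed.
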